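(* Let $(\varGamma,C)$ be a split-step SUSYQW whose coin has the form $C(x)=C(\mathrm R)$ for $x\ge1$ and $C(x)=C(\mathrm L)$ for $x\le0$, where $C(\mathrm L),C(\mathrm R)$ are nontrivial. Let $d_\pm=\dim\ker Q_{\epsilon_\pm}$. (1) If $b(\mathrm L)=0$ and $b(\mathrm R)=0$ (Type I), then $d_\pm=1$ if $a(\mathrm L)a(\mathrm R)<0$ and $d_\pm=0$ if $a(\mathrm L)a(\mathrm R)>0$. (2) If $b(\mathrm L)=0$ and $b(\mathrm R)\ne0$ (Type II), then $d_\pm=1$ if $\mp p+a(\mathrm L)a(\mathrm R)<0$ and $d_\pm=0$ if $\mp p+a(\mathrm L)a(\mathrm R)\ge0$. (3) If $b(\mathrm L)\neq0$ and $b(\mathrm R)=0$ (Type II'), then $d_\pm=1$ if $\pm p+a(\mathrm L)a(\mathrm R)<0$ and $d_\pm=0$ if $\pm p+a(\mathrm L)a(\mathrm R)\ge0$. (4) If $b(\mathrm L)\ne0$ and $b(\mathrm R)\ne0$ (Type III), then $d_\pm=1$ if $a(\mathrm R)<\pm p<a(\mathrm L)$ or $a(\mathrm L)<\mp p<a(\mathrm R)$, and $d_\pm=0$ otherwise. (In each case the upper signs give $d_+$ and the lower signs give $d_-$.)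
   Context: Let $L$ be the left shift $(L\Psi)(x)=\Psi(x+1)$ on $\ell^2(\mathbb Z)$. A split-step SUSYQW is $\varGamma=\begin{pmatrix} p & qL\\ \overline{q}L^* & -p\end{pmatrix}$, $C=\begin{pmatrix} a_1 & \overline{b}\\ b & a_2\end{pmatrix}$ on $\ell^2(\mathbb Z)\oplus\ell^2(\mathbb Z)$ with $p\in\mathbb R$, $q\in\mathbb C\setminus\{0\}$, $p^2+|q|^2=1$, $\theta=\operatorname{Arg}q$, real sequences $a_1,a_2$ and complex sequence $b$ on $\mathbb Z$ (as multiplication operators) with $a_j(x)^2+|b(x)|^2=1$, $b(x)(a_1(x)+a_2(x))=0$. Write $C(x)=\begin{pmatrix} a_1(x)&\overline{b(x)}\\ b(x)&a_2(x)\end{pmatrix}$. A $2\times2$ unitary Hermitian matrix is trivial if it equals $\pm I$; for nontrivial $C(\sharp)$ (entries $a_j(\sharp),b(\sharp)$) one has $a_1(\sharp)=-a_2(\sharp)=:a(\sharp)$ and $a(\sharp)^2+|b(\sharp)|^2=1$. $Q_{\epsilon_\pm}$ are the operators on $\ell^2(\mathbb Z)$ defined by $-2iQ_{\epsilon_\pm}=(1\pm p)e^{i\theta}Lb-(1\mp p)e^{-i\theta}\overline{b}L^*\pm|q|(a_2(\cdot+1)-a_1)$ (products are compositions with multiplication operators). *)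

From Stdlib Require Import Reals Lra ZArith List.
Open Scope R_scope.

Definition Cx : Type := (R * R)%type.
Definition Cre (z : Cx) : R := fst z.
Definition Cim (z : Cx) : R := snd z.
Definition CR (r : R) : Cx := (r, 0).
Definition C0 : Cx := (0, 0).
Definition Ci : Cx := (0, 1).
Definition Cadd (z w : Cx) : Cx := (Cre z + Cre w, Cim z + Cim w).
Definition Copp (z : Cx) : Cx := (- Cre z, - Cim z).
Definition Cmul (z w : Cx) : Cx :=
  (Cre z * Cre w - Cim z * Cim w, Cre z * Cim w + Cim z * Cre w).
Definition Cconj (z : Cx) : Cx := (Cre z, - Cim z).
Definition Cnorm2 (z : Cx) : R := Cre z * Cre z + Cim z * Cim z.
Definition Cabs (z : Cx) : R := sqrt (Cnorm2 z).
Definition Cinv (z : Cx) : Cx := (Cre z / Cnorm2 z, - Cim z / Cnorm2 z).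

(* e^{i Arg q} = q / |q|  (for q <> 0) *)
Definition expiArg (q : Cx) : Cx := Cmul (CR (/ Cabs q)) q.

Definition state := Z -> Cx.

(* symmetric partial sums  sum_{x=-n}^{n} |psi x|^2 *)
Definition l2_partial (psi : state) (n : nat) : R :=
  sum_f_R0 (fun k => Cnorm2 (psi (Z.of_nat k - Z.of_nat n)%Z)) (2 * n).

Definition in_l2 (psi : state) : Prop :=
  exists l : R, Un_cv (l2_partial psi) l.

Definition sgn (s : bool) : R := if s then 1 else -1.

(* (-2i Q_eps psi)(x) =
     (1 + s p) e^{i th} b(x+1) psi(x+1)
   - (1 - s p) e^{-i th} conj(b(x)) psi(x-1)
   + s |q| (a2(x+1) - a1(x)) psi(x),   s = +1 for eps_+, -1 for eps_- *)
Definition minus2iQ (s : bool) (p : R) (q : Cx)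
    (a1 a2 : Z -> R) (b : Z -> Cx) (psi : state) : state :=
  fun x =>
    Cadd (Cadd
      (Cmul (CR (1 + sgn s * p)) (Cmul (expiArg q) (Cmul (b (x + 1)%Z) (psi (x + 1)%Z))))
      (Copp (Cmul (CR (1 - sgn s * p))
               (Cmul (Cconj (expiArg q)) (Cmul (Cconj (b x)) (psi (x - 1)%Z))))))
      (Cmul (CR (sgn s * Cabs q * (a2 (x + 1)%Z - a1 x))) (psi x)).

(* Q_eps = (-2i)^{-1} (-2i Q_eps) = (i/2) (-2i Q_eps) *)
Definition Qeps (s : bool) (p : R) (q : Cx)
    (a1 a2 : Z -> R) (b : Z -> Cx) (psi : state) : state :=
  fun x => Cmul (0, / 2) (minus2iQ s p q a1 a2 b psi x).

Definition in_kernel (T : state -> state) (psi : state) : Prop :=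
  in_l2 psi /\ forall x, T psi x = C0.

Definition lincomb (n : nat) (c : nat -> Cx) (e : nat -> state) : state :=
  fun x => fold_right Cadd C0 (map (fun k => Cmul (c k) (e k x)) (seq 0 n)).

Definition kernel_dim (T : state -> state) (n : nat) : Prop :=
  exists e : nat -> state,
    (forall k, (k < n)%nat -> in_kernel T (e k)) /\
    (forall c : nat -> Cx,
        (forall x, lincomb n c e x = C0) -> forall k, (k < n)%nat -> c k = C0) /\
    (forall psi, in_kernel T psi ->
        exists c : nat -> Cx, forall x, psi x = lincomb n c e x).

(* a 2x2 matrix [[a1, conj b],[b, a2]] (a1,a2 real) is unitary & Hermitian
   of the SUSYQW form *)
Definition coin_ok (a1 a2 : R) (b : Cx) : Prop :=
  a1 * a1 + Cnorm2 b = 1 /\ a2 * a2 + Cnorm2 b = 1 /\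
  Cmul b (CR (a1 + a2)) = C0.

Definition coin_nontrivial (a1 a2 : R) (b : Cx) : Prop :=
  ~ (a1 = 1 /\ a2 = 1 /\ b = C0) /\ ~ (a1 = -1 /\ a2 = -1 /\ b = C0).

(* On each half-line the kernel equation of [Q_eps] is a three-term recurrence with constant
   coefficients.  Where the coin is diagonal (b = 0) it forces psi to vanish beyond the origin;
   otherwise psi is a combination of the powers of the two characteristic roots, labelled by a
   sign, and only a root of modulus < 1 gives a square-summable tail.  The equation at the
   origin is satisfied by the pair of roots with the same label on both sides (or, next to a
   diagonal coin, by the one label singled out by that coin), and, together with the decay of
   the tails, it pins psi down to a multiple of psi(0).  Hence the kernel is at most
   one-dimensional, and it is a line exactly when the roots selected by some label lie inside
   the unit disk on both sides, which unwinds to the sign conditions of the four types. *)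

From Stdlib Require Import Reals ZArith Lra Lia Psatz.
From Pilot Require Import Defs.
From Coquelicot Require Import Coquelicot.
Open Scope R_scope.

(* The complex numbers of [Defs] are Coquelicot's [C] up to conversion; exposing this lets
   [ring] work on them. *)
Ltac in_C :=
  change Defs.Cadd with Cplus; change Defs.Cmul with Cmult; change C0 with (RtoC 0);
  match goal with |- ?a = ?b => change (@eq C a b) end.

Lemma Cnorm2_mult (z w : C) : Cnorm2 (z * w)%C = Cnorm2 z * Cnorm2 w.
Proof. destruct z, w; unfold Cnorm2, Cre, Cim; simpl; ring. Qed.

Lemma Cnorm2_conj (z : C) : Cnorm2 (Cconj z) = Cnorm2 z.
Proof. destruct z; unfold Cnorm2, Cre, Cim; simpl; ring. Qed.

Lemma Cnorm2_RtoC (r : R) : Cnorm2 (RtoC r) = r * r.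
Proof. unfold Cnorm2, Cre, Cim, RtoC; simpl; ring. Qed.

Lemma Cnorm2_pow (z : C) (n : nat) : Cnorm2 (z ^ n)%C = Cnorm2 z ^ n.
Proof. induction n; simpl; [rewrite Cnorm2_RtoC | rewrite Cnorm2_mult, IHn]; ring. Qed.

Lemma Cnorm2_ge0 (z : C) : 0 <= Cnorm2 z.
Proof. destruct z; unfold Cnorm2, Cre, Cim; simpl; nra. Qed.

Lemma Cnorm2_eq0 (z : C) : Cnorm2 z = 0 -> z = 0%C.
Proof.
  destruct z as [x y]; unfold Cnorm2, Cre, Cim; simpl; intro H.
  assert (x = 0) by nra; assert (y = 0) by nra; subst; reflexivity.
Qed.

Lemma Cnorm2_pos (z : C) : z <> 0%C -> 0 < Cnorm2 z.
Proof.
  intro H; destruct (Cnorm2_ge0 z) as [|E]; auto.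
  exfalso; apply H, Cnorm2_eq0; auto.
Qed.

Lemma Cnorm2_minus_le (z w : C) : Cnorm2 (z - w)%C <= 2 * Cnorm2 z + 2 * Cnorm2 w.
Proof.
  destruct z as [x y], w as [u v]; unfold Cnorm2, Cre, Cim; simpl.
  pose proof (pow2_ge_0 (x + u)); pose proof (pow2_ge_0 (y + v)); nra.
Qed.

Lemma Cmult_conj_r (z : C) : (z * Cconj z)%C = RtoC (Cnorm2 z).
Proof. destruct z; unfold Cnorm2, Cre, Cim, RtoC; apply injective_projections; simpl; ring. Qed.

Lemma Cmult_eq0 (z w : C) : (z * w)%C = 0%C -> z = 0%C \/ w = 0%C.
Proof.
  intro H; assert (E : Cnorm2 (z * w)%C = 0) by (rewrite H, Cnorm2_RtoC; ring).
  rewrite Cnorm2_mult in E; destruct (Rmult_integral _ _ E); [left|right]; apply Cnorm2_eq0; auto.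
Qed.

Lemma Cmult_cancel_l (a x y : C) : a <> 0%C -> (a * x)%C = (a * y)%C -> x = y.
Proof.
  intros Ha H; replace x with (/ a * (a * x))%C by (field; auto).
  rewrite H; field; auto.
Qed.

Lemma RtoC_neq0 (r : R) : r <> 0 -> RtoC r <> 0%C.
Proof. intros H E; apply H; injection E; auto. Qed.

Lemma Cminus_eq0 (x y : C) : (x - y)%C = 0%C -> x = y.
Proof. intro H; replace x with (x - y + y)%C by ring; rewrite H; ring. Qed.

Lemma Cconj_0 : Cconj 0%C = 0%C.
Proof. apply injective_projections; simpl; ring. Qed.

Lemma Cpow_0_S (n : nat) : (0 ^ S n)%C = 0%C.
Proof. simpl; ring. Qed.

Lemma Cmult_RtoC_neq0 (x : R) (z : C) : 0 < x -> 0 < Cnorm2 z -> (RtoC x * z)%C <> 0%C.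
Proof.
  intros Hx Hz E; destruct (Cmult_eq0 _ _ E) as [E'|E'].
  - exact (RtoC_neq0 x ltac:(lra) E').
  - rewrite E', Cnorm2_RtoC in Hz; lra.
Qed.

Definition right_seq (psi : state) (n : nat) : C := psi (Z.of_nat n).
Definition left_seq (psi : state) (n : nat) : C := psi (- Z.of_nat n)%Z.

(* The value at 0 is taken from [u]; [v 0] is ignored. *)
Definition glue (u v : nat -> C) : state :=
  fun x => if (0 <=? x)%Z then u (Z.to_nat x) else v (Z.to_nat (- x)).

Lemma right_seq_glue u v k : right_seq (glue u v) k = u k.
Proof.
  unfold right_seq, glue; destruct (Z.leb_spec 0 (Z.of_nat k)); [|lia].
  rewrite Nat2Z.id; auto.
Qed.

Lemma left_seq_glue u v k : u 0%nat = v 0%nat -> left_seq (glue u v) k = v k.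
Proof.
  intro H; unfold left_seq, glue; destruct k as [|k]; [exact H|].
  destruct (Z.leb_spec 0 (- Z.of_nat (S k))); [lia|].
  rewrite Z.opp_involutive, Nat2Z.id; auto.
Qed.

Lemma l2_partial_S psi n :
  l2_partial psi (S n) =
  l2_partial psi n + Cnorm2 (right_seq psi (S n)) + Cnorm2 (left_seq psi (S n)).
Proof.
  unfold l2_partial, right_seq, left_seq.
  replace (2 * S n)%nat with (S (S (2 * n))) by lia.
  rewrite decomp_sum by lia.
  change (Init.Nat.pred (S (S (2 * n)))) with (S (2 * n)); rewrite tech5.
  rewrite (sum_eq (fun i => Cnorm2 (psi (Z.of_nat (S i) - Z.of_nat (S n))%Z))
                  (fun k => Cnorm2 (psi (Z.of_nat k - Z.of_nat n)%Z))).
  2: { intros i _; do 2 f_equal; lia. }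
  replace (Z.of_nat 0 - Z.of_nat (S n))%Z with (- Z.of_nat (S n))%Z by lia.
  replace (Z.of_nat (S (S (2 * n))) - Z.of_nat (S n))%Z with (Z.of_nat (S n)) by lia.
  ring.
Qed.

Lemma in_l2_tails psi : in_l2 psi ->
  Un_cv (fun n => Cnorm2 (right_seq psi n)) 0 /\ Un_cv (fun n => Cnorm2 (left_seq psi n)) 0.
Proof.
  intros [l Hl].
  assert (H : forall eps, eps > 0 -> exists N, forall n, (n >= N)%nat ->
            Cnorm2 (right_seq psi n) + Cnorm2 (left_seq psi n) < eps).
  { intros eps He; destruct (Hl (eps / 2)) as [N HN]; [lra|].
    exists (S N); intros [|m] Hm; [lia|].
    pose proof (HN m ltac:(lia)) as A1; pose proof (HN (S m) ltac:(lia)) as A2.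
    rewrite l2_partial_S in A2; unfold Rdist in *.
    apply Rabs_def2 in A1; apply Rabs_def2 in A2; lra. }
  split; intros eps He; destruct (H eps He) as [N HN]; exists N; intros n Hn;
    specialize (HN n Hn); unfold Rdist; rewrite Rminus_0_r;
    pose proof (Cnorm2_ge0 (right_seq psi n)); pose proof (Cnorm2_ge0 (left_seq psi n));
    rewrite Rabs_right; lra.
Qed.

Lemma in_l2_geometric_bound psi (r K : R) : 0 <= r < 1 -> 0 <= K ->
  (forall n, Cnorm2 (right_seq psi n) <= K * r ^ n) ->
  (forall n, Cnorm2 (left_seq psi n) <= K * r ^ n) -> in_l2 psi.
Proof.
  intros Hr HK Hright Hleft.
  assert (Hpartial : forall n, l2_partial psi n <= 2 * K * sum_f_R0 (fun i => r ^ i) n).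
  { induction n as [|n IH].
    - specialize (Hright 0%nat); unfold l2_partial, right_seq in *; simpl in *; lra.
    - rewrite l2_partial_S, tech5; specialize (Hright (S n)); specialize (Hleft (S n)); nra. }
  assert (Hgeom : forall n, sum_f_R0 (fun i => r ^ i) n <= / (1 - r)).
  { intro n; rewrite tech3 by lra; unfold Rdiv.
    rewrite <- (Rmult_1_l (/ (1 - r))) at 2.
    apply Rmult_le_compat_r; [apply Rlt_le, Rinv_0_lt_compat; lra|].
    pose proof (pow_le r (S n) (proj1 Hr)); lra. }
  destruct (growing_cv (l2_partial psi)) as [l Hl].
  - intro n; rewrite l2_partial_S.
    pose proof (Cnorm2_ge0 (right_seq psi (S n))); pose proof (Cnorm2_ge0 (left_seq psi (S n))); lra.
  - exists (2 * K * / (1 - r)); intros x [i ->].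
    specialize (Hpartial i); specialize (Hgeom i); nra.
  - exists l; exact Hl.
Qed.

Lemma in_l2_glue_pow (l m : C) : Cnorm2 l < 1 -> Cnorm2 m < 1 ->
  in_l2 (glue (Cpow l) (Cpow m)).
Proof.
  intros Hl Hm; apply (in_l2_geometric_bound _ (Rmax (Cnorm2 l) (Cnorm2 m)) 1).
  - pose proof (Cnorm2_ge0 l); pose proof (Rmax_l (Cnorm2 l) (Cnorm2 m)).
    split; [lra|]; apply Rmax_lub_lt; auto.
  - lra.
  - intro n; rewrite right_seq_glue, Cnorm2_pow, Rmult_1_l.
    apply pow_incr; split; [apply Cnorm2_ge0 | apply Rmax_l].
  - intro n; rewrite left_seq_glue, Cnorm2_pow, Rmult_1_l by reflexivity.
    apply pow_incr; split; [apply Cnorm2_ge0 | apply Rmax_r].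
Qed.

Definition spanned_by (K : state -> Prop) (e : state) : Prop :=
  forall psi, K psi -> forall x, psi x = (psi 0%Z * e x)%C.

Lemma glue_pow_spans psi (r l : C) :
  (forall k, right_seq psi k = (r ^ k * psi 0%Z)%C) ->
  (forall k, left_seq psi k = (l ^ k * psi 0%Z)%C) ->
  forall x, psi x = (psi 0%Z * glue (Cpow r) (Cpow l) x)%C.
Proof.
  intros Hr Hl x; unfold glue; in_C; destruct (Z.leb_spec 0 x).
  - replace x with (Z.of_nat (Z.to_nat x)) at 1 by lia.
    change (psi (Z.of_nat (Z.to_nat x))) with (right_seq psi (Z.to_nat x)); rewrite Hr; ring.
  - replace x with (- Z.of_nat (Z.to_nat (- x)))%Z at 1 by lia.
    change (psi (- Z.of_nat (Z.to_nat (- x)))%Z) with (left_seq psi (Z.to_nat (- x))).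
    rewrite Hl; ring.
Qed.

Lemma spanned_glue_right K (r l : C) psi : spanned_by K (glue (Cpow r) (Cpow l)) -> K psi ->
  forall k, right_seq psi k = (r ^ k * psi 0%Z)%C.
Proof.
  intros H Hpsi k; unfold right_seq; rewrite (H psi Hpsi).
  fold (right_seq (glue (Cpow r) (Cpow l)) k); rewrite right_seq_glue; ring.
Qed.

Lemma spanned_glue_left K (r l : C) psi : spanned_by K (glue (Cpow r) (Cpow l)) -> K psi ->
  forall k, left_seq psi k = (l ^ k * psi 0%Z)%C.
Proof.
  intros H Hpsi k; unfold left_seq; rewrite (H psi Hpsi).
  fold (left_seq (glue (Cpow r) (Cpow l)) k); rewrite left_seq_glue by reflexivity; ring.
Qed.

Section Recurrence.
Variables (h : nat -> C) (l m : C).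
Hypothesis Hrec : forall k, h (S (S k)) = ((l + m) * h (S k) - l * m * h k)%C.

Lemma recurrence_drift k : (h (S k) - m * h k = l ^ k * (h 1%nat - m * h 0%nat))%C.
Proof.
  induction k as [|k IH]; [simpl; ring|].
  rewrite Cpow_S, Hrec; transitivity (l * (h (S k) - m * h k))%C; [ring|].
  rewrite IH; ring.
Qed.

Lemma recurrence_geometric : h 1%nat = (m * h 0%nat)%C -> forall k, h k = (m ^ k * h 0%nat)%C.
Proof.
  intro H1.
  assert (H : forall k, h k = (m ^ k * h 0%nat)%C /\ h (S k) = (m ^ S k * h 0%nat)%C).
  { induction k as [|k [A B]]; [split; simpl; [ring | rewrite H1; ring]|].
    split; [exact B|]; rewrite Hrec, A, B; simpl; ring. }
  intro k; apply H.
Qed.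

End Recurrence.

Lemma decaying_drift_zero (h : nat -> C) (l m d : C) :
  Un_cv (fun n => Cnorm2 (h n)) 0 -> 1 <= Cnorm2 l ->
  (forall k, (h (S k) - m * h k = l ^ k * d)%C) -> d = 0%C.
Proof.
  intros Hcv Hl Hk; apply Cnorm2_eq0.
  destruct (Cnorm2_ge0 d) as [Hd|Hd]; [exfalso|auto].
  set (K := 2 + 2 * Cnorm2 m).
  assert (HK : 0 < K) by (pose proof (Cnorm2_ge0 m); unfold K; lra).
  destruct (Hcv (Cnorm2 d / (2 * K))) as [N HN].
  { apply Rlt_gt, Rdiv_lt_0_compat; lra. }
  pose proof (HN N (le_n N)) as A1; pose proof (HN (S N) ltac:(lia)) as A2.
  unfold Rdist in A1, A2; rewrite Rminus_0_r in A1, A2.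
  rewrite Rabs_right in A1, A2 by (apply Rle_ge, Cnorm2_ge0).
  pose proof (Cnorm2_minus_le (h (S N)) (m * h N)%C) as A3.
  rewrite Hk, Cnorm2_mult, Cnorm2_pow, Cnorm2_mult in A3.
  pose proof (pow_R1_Rle _ N Hl).
  assert (Cnorm2 d <= Cnorm2 l ^ N * Cnorm2 d) by nra.
  assert (Cnorm2 d / (2 * K) * (2 * K) = Cnorm2 d) by (field; lra).
  pose proof (Cnorm2_ge0 m); pose proof (Cnorm2_ge0 (h N)); unfold K in *; nra.
Qed.

(* In a decaying solution the component along the root of modulus >= 1 vanishes. *)
Lemma decaying_recurrence_ratio (h : nat -> C) (l m : C) :
  Un_cv (fun n => Cnorm2 (h n)) 0 -> 1 <= Cnorm2 l ->
  (forall k, h (S (S k)) = ((l + m) * h (S k) - l * m * h k)%C) ->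
  h 1%nat = (m * h 0%nat)%C.
Proof.
  intros Hcv Hl Hrec; apply Cminus_eq0.
  apply (decaying_drift_zero h l m); auto; apply recurrence_drift, Hrec.
Qed.

Lemma decaying_geometric_zero (h : nat -> C) (m c : C) :
  Un_cv (fun n => Cnorm2 (h n)) 0 -> 1 <= Cnorm2 m ->
  (forall k, h k = (m ^ k * c)%C) -> c = 0%C.
Proof.
  intros Hcv Hm Hk.
  assert (H : (m * c)%C = 0%C).
  { apply (decaying_drift_zero h m 0); auto; intro k; rewrite !Hk; simpl; ring. }
  destruct (Cmult_eq0 _ _ H) as [E|E]; auto.
  rewrite E, Cnorm2_RtoC in Hm; lra.
Qed.

Lemma vanishing_tail_geometric (h : nat -> C) :
  (forall k, h (S k) = 0%C) -> forall k, h k = (0 ^ k * h 0%nat)%C.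
Proof. intros H [|k]; simpl; [ring | rewrite H; ring]. Qed.

Definition side_eq (P M c : R) (b : C) (h : nat -> C) : Prop :=
  forall k, (RtoC P * (b * h (S (S k))) - RtoC M * (Cconj b * h k)
             - RtoC (2 * c) * h (S k))%C = 0%C.

Lemma side_eq_degenerate P M c h : c <> 0 -> side_eq P M c 0 h -> forall k, h (S k) = 0%C.
Proof.
  intros Hc Hh k; specialize (Hh k).
  assert (E : (RtoC (- (2 * c)) * h (S k))%C = 0%C).
  { rewrite <- Hh, RtoC_opp, Cconj_0; ring. }
  destruct (Cmult_eq0 _ _ E) as [E'|E']; auto.
  exfalso; apply (RtoC_neq0 (- (2 * c))); auto; lra.
Qed.

Lemma side_eq_degenerate_pow0 P M c : side_eq P M c 0 (Cpow 0).
Proof.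
  intro k; rewrite !Cpow_0_S, Cconj_0; ring.
Qed.

Lemma sgn_sq sg : sgn sg * sgn sg = 1.
Proof. destruct sg; simpl; ring. Qed.

Lemma sgn_negb sg : sgn (negb sg) = - sgn sg.
Proof. destruct sg; simpl; ring. Qed.

Lemma sgn_mult_cases sg sg' : sgn sg * sgn sg' = 1 \/ sgn sg * sgn sg' = -1.
Proof. destruct sg, sg'; simpl; lra. Qed.

(* The two roots of [P b z^2 - 2 c z - M (conj b) = 0], where [n = |b|^2] and
   [D^2 = c^2 + P M n] is the reduced discriminant. *)
Definition char_root (P n c D : R) (b : C) (sg : bool) : C :=
  (RtoC ((c + sgn sg * D) / (P * n)) * Cconj b)%C.

Lemma Cnorm2_char_root P n c D b sg : Cnorm2 b = n ->
  Cnorm2 (char_root P n c D b sg) = ((c + sgn sg * D) / (P * n)) ^ 2 * n.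
Proof. intro H; unfold char_root; rewrite Cnorm2_mult, Cnorm2_RtoC, Cnorm2_conj, H; ring. Qed.

Section CharRoots.
Variables (P M n c D : R) (b : C).
Hypotheses (HP : 0 < P) (Hn : 0 < n) (Hb : Cnorm2 b = n) (HD : D * D = c * c + P * M * n).

Lemma char_root_mult sg : (RtoC P * (b * char_root P n c D b sg))%C = RtoC (c + sgn sg * D).
Proof.
  unfold char_root.
  transitivity (RtoC P * RtoC ((c + sgn sg * D) / (P * n)) * (b * Cconj b))%C; [ring|].
  rewrite Cmult_conj_r, Hb, <- !RtoC_mult; f_equal; field; lra.
Qed.

Lemma side_eq_char_root_pow sg : side_eq P M c b (Cpow (char_root P n c D b sg)).
Proof.
  intro k; pose proof (char_root_mult sg) as Hz; set (z := char_root P n c D b sg) in *.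
  assert (Ez : (RtoC (c + sgn sg * D) * z - RtoC (2 * c) * z = RtoC M * Cconj b)%C).
  { unfold z, char_root.
    transitivity (RtoC ((c + sgn sg * D - 2 * c) * ((c + sgn sg * D) / (P * n))) * Cconj b)%C.
    - rewrite (RtoC_mult (c + sgn sg * D - 2 * c)), (RtoC_minus (c + sgn sg * D)); ring.
    - do 2 f_equal.
      replace ((c + sgn sg * D - 2 * c) * ((c + sgn sg * D) / (P * n)))
        with ((sgn sg * sgn sg * (D * D) - c * c) / (P * n)) by (field; lra).
      rewrite sgn_sq, HD; field; lra. }
  simpl Cpow.
  transitivity (z ^ k * ((RtoC P * (b * z)) * z - RtoC (2 * c) * z - RtoC M * Cconj b))%C;
    [ring|].
  rewrite Hz, Ez; ring.
Qed.

(* Vieta: the roots have sum [2c/(P b)] and product [-M conj b/(P b)]. *)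
Lemma side_eq_char_recurrence h sg : side_eq P M c b h ->
  forall k, h (S (S k)) =
    ((char_root P n c D b sg + char_root P n c D b (negb sg)) * h (S k)
     - char_root P n c D b sg * char_root P n c D b (negb sg) * h k)%C.
Proof.
  intros Hh k.
  assert (HPb : (RtoC P * b)%C <> 0%C) by (apply Cmult_RtoC_neq0; lra).
  apply (Cmult_cancel_l (RtoC P * b)); auto.
  set (u := char_root P n c D b sg); set (v := char_root P n c D b (negb sg)).
  assert (Hsum : (RtoC P * (b * u) + RtoC P * (b * v))%C = RtoC (2 * c)).
  { unfold u, v; rewrite !char_root_mult, <- RtoC_plus; f_equal.
    destruct sg; simpl; ring. }
  assert (Hprod : (RtoC P * (b * u) * (RtoC P * (b * v)))%C = RtoC (- (P * M * n))).
  { unfold u, v; rewrite !char_root_mult, <- RtoC_mult; f_equal.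
    replace (- (P * M * n)) with (c * c - D * D) by lra.
    destruct sg; simpl; ring. }
  assert (Huv : (RtoC P * b * (u * v))%C = (- RtoC M * Cconj b)%C).
  { apply (Cmult_cancel_l (RtoC P * b)); auto.
    transitivity (RtoC P * (b * u) * (RtoC P * (b * v)))%C; [ring|].
    rewrite Hprod; transitivity (- RtoC P * RtoC M * (b * Cconj b))%C; [|ring].
    rewrite Cmult_conj_r, Hb, RtoC_opp, !RtoC_mult; ring. }
  transitivity ((RtoC P * (b * u) + RtoC P * (b * v)) * h (S k)
                - RtoC P * b * (u * v) * h k)%C; [|ring].
  rewrite Hsum, Huv; apply Cminus_eq0; rewrite <- (Hh k); ring.
Qed.

End CharRoots.

(* The criterion [Cnorm2 (char_root ..) < 1] in real form, for the right half-line; the left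
   one is the instance [t := -t], [tp := -tp]. *)
Lemma root_sq_lt1_iff (P Q t a tp sg : R) : P = 1 + tp -> -1 < tp < 1 ->
  Q * Q = 1 - tp * tp -> t * t = 1 -> sg * sg = 1 -> 0 < 1 - a * a ->
  ((t * Q * a + sg * Q) / (P * (1 - a * a))) ^ 2 * (1 - a * a) < 1 <-> sg * t * a < tp.
Proof.
  intros HP Htp HQ Ht Hs Ha.
  set (y := sg * t * a).
  assert (Hy2 : y * y = a * a).
  { unfold y; transitivity ((sg * sg) * (t * t) * (a * a)); [ring|]; rewrite Hs, Ht; ring. }
  assert (Hy : -1 < y < 1) by nra.
  assert (E1 : t * Q * a + sg * Q = sg * Q * (1 + y)).
  { unfold y; replace (sg * Q * (1 + sg * t * a)) with (sg * Q + (sg * sg) * t * Q * a) by ring.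
    rewrite Hs; ring. }
  assert (E2 : 1 - a * a = (1 - y) * (1 + y)) by nra.
  rewrite E1, E2.
  replace ((sg * Q * (1 + y) / (P * ((1 - y) * (1 + y)))) ^ 2 * ((1 - y) * (1 + y)))
    with ((sg * sg) * (Q * Q) * (1 + y) / (P * P * (1 - y))) by (field; lra).
  rewrite Hs, HQ.
  replace (1 * (1 - tp * tp) * (1 + y) / (P * P * (1 - y)))
    with ((1 - tp) * (1 + y) / (P * (1 - y))) by (subst P; field; lra).
  assert (HD : 0 < P * (1 - y)) by nra.
  assert (E3 : (1 - tp) * (1 + y) / (P * (1 - y)) * (P * (1 - y)) = (1 - tp) * (1 + y))
    by (field; lra).
  split; intro H.
  - apply (Rmult_lt_compat_r (P * (1 - y))) in H; auto; rewrite E3 in H; nra.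
  - apply (Rmult_lt_reg_r (P * (1 - y))); auto; rewrite E3; nra.
Qed.

Section Kernel.
Variables (P M Q t tp aR aL : R) (bR bL : C).
Hypotheses (HP : P = 1 + tp) (HM : M = 1 - tp) (Htp : -1 < tp < 1) (HQ : 0 < Q)
  (HQ2 : Q * Q = 1 - tp * tp) (Ht : t * t = 1).

(* The kernel equations of [Q_eps], with [P = 1 + tp], [M = 1 - tp], [Q = |q|], [t = sgn s],
   [tp = sgn s * p] and the effective coins [bR = e^(i theta) b(R)],
   [bL = conj (e^(i theta) b(L))]: the second conjunct is the equation at x >= 1, the third the
   one at x <= -1 (read towards -oo), the last the one at x = 0. *)
Definition kernel_system (psi : state) : Prop :=
  in_l2 psi /\
  side_eq P M (t * Q * aR) bR (right_seq psi) /\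
  side_eq M P (- (t * Q * aL)) bL (left_seq psi) /\
  (RtoC P * (bR * right_seq psi 1) - RtoC M * (bL * left_seq psi 1)
   - RtoC (t * Q * (aR + aL)) * psi 0%Z)%C = 0%C.

Definition root_R (sg : bool) : C := char_root P (1 - aR * aR) (t * Q * aR) Q bR sg.
Definition root_L (sg : bool) : C := char_root M (1 - aL * aL) (- (t * Q * aL)) Q bL sg.

Lemma discriminant_R : Q * Q = t * Q * aR * (t * Q * aR) + P * M * (1 - aR * aR).
Proof.
  replace (t * Q * aR * (t * Q * aR)) with (t * t * (Q * Q) * (aR * aR)) by ring.
  rewrite Ht, HP, HM, HQ2; ring.
Qed.

Lemma discriminant_L : Q * Q = - (t * Q * aL) * - (t * Q * aL) + M * P * (1 - aL * aL).
Proof.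
  replace (- (t * Q * aL) * - (t * Q * aL)) with (t * t * (Q * Q) * (aL * aL)) by ring.
  rewrite Ht, HP, HM, HQ2; ring.
Qed.

Lemma coupling_neq0 a : a * a = 1 -> t * Q * a <> 0.
Proof.
  intros Ha E.
  assert (E' : t * a * (t * Q * a) = Q * ((t * t) * (a * a))) by ring.
  rewrite E, Ht, Ha in E'; lra.
Qed.

Section RightBulk.
Hypotheses (HaR : 0 < 1 - aR * aR) (HbR : Cnorm2 bR = 1 - aR * aR).

Lemma root_R_mult sg : (RtoC P * (bR * root_R sg))%C = RtoC (t * Q * aR + sgn sg * Q).
Proof. apply char_root_mult; auto; lra. Qed.

Lemma root_R_lt1_iff sg : Cnorm2 (root_R sg) < 1 <-> sgn sg * t * aR < tp.
Proof.
  unfold root_R; rewrite Cnorm2_char_root by auto.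
  apply root_sq_lt1_iff; auto using sgn_sq.
Qed.

Lemma side_eq_root_R sg : side_eq P M (t * Q * aR) bR (Cpow (root_R sg)).
Proof. apply side_eq_char_root_pow; auto; [lra | apply discriminant_R]. Qed.

Lemma kernel_right_recurrence psi sg : kernel_system psi ->
  forall k, right_seq psi (S (S k)) =
    ((root_R sg + root_R (negb sg)) * right_seq psi (S k)
     - root_R sg * root_R (negb sg) * right_seq psi k)%C.
Proof.
  intros (_ & Hr & _); apply (side_eq_char_recurrence P M); auto; [lra | apply discriminant_R].
Qed.

End RightBulk.

Section LeftBulk.
Hypotheses (HaL : 0 < 1 - aL * aL) (HbL : Cnorm2 bL = 1 - aL * aL).

Lemma root_L_mult sg : (RtoC M * (bL * root_L sg))%C = RtoC (- (t * Q * aL) + sgn sg * Q).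
Proof. apply char_root_mult; auto; lra. Qed.

Lemma root_L_lt1_iff sg : Cnorm2 (root_L sg) < 1 <-> tp < sgn sg * t * aL.
Proof.
  unfold root_L; rewrite Cnorm2_char_root by auto.
  replace (- (t * Q * aL)) with (- t * Q * aL) by ring.
  rewrite (root_sq_lt1_iff M Q (- t) aL (- tp)) by (try apply sgn_sq; auto; lra).
  lra.
Qed.

Lemma side_eq_root_L sg : side_eq M P (- (t * Q * aL)) bL (Cpow (root_L sg)).
Proof. apply side_eq_char_root_pow; auto; [lra | apply discriminant_L]. Qed.

Lemma kernel_left_recurrence psi sg : kernel_system psi ->
  forall k, left_seq psi (S (S k)) =
    ((root_L sg + root_L (negb sg)) * left_seq psi (S k)
     - root_L sg * root_L (negb sg) * left_seq psi k)%C.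
Proof.
  intros (_ & _ & Hl & _); apply (side_eq_char_recurrence M P); auto; [lra | apply discriminant_L].
Qed.

End LeftBulk.

Lemma kernel_right_degenerate psi : bR = 0%C -> aR * aR = 1 -> kernel_system psi ->
  forall k, right_seq psi (S k) = 0%C.
Proof.
  intros HbR HaR (_ & Hr & _); rewrite HbR in Hr.
  exact (side_eq_degenerate _ _ _ _ (coupling_neq0 aR HaR) Hr).
Qed.

Lemma kernel_left_degenerate psi : bL = 0%C -> aL * aL = 1 -> kernel_system psi ->
  forall k, left_seq psi (S k) = 0%C.
Proof.
  intros HbL HaL (_ & _ & Hl & _); rewrite HbL in Hl.
  apply (side_eq_degenerate M P (- (t * Q * aL))); [|exact Hl].
  pose proof (coupling_neq0 aL HaL); lra.
Qed.

Lemma kernel_system_glue_pow (r l : C) : Cnorm2 r < 1 -> Cnorm2 l < 1 ->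
  side_eq P M (t * Q * aR) bR (Cpow r) -> side_eq M P (- (t * Q * aL)) bL (Cpow l) ->
  (RtoC P * (bR * r) - RtoC M * (bL * l))%C = RtoC (t * Q * (aR + aL)) ->
  kernel_system (glue (Cpow r) (Cpow l)).
Proof.
  intros Hr Hl Sr Sl Hj; split; [|split; [|split]].
  - apply in_l2_glue_pow; auto.
  - intro k; rewrite !right_seq_glue; apply Sr.
  - intro k; rewrite !left_seq_glue by reflexivity; apply Sl.
  - rewrite right_seq_glue, left_seq_glue by reflexivity.
    change (glue (Cpow r) (Cpow l) 0%Z) with (r ^ 0)%C.
    rewrite <- Hj; simpl; ring.
Qed.

Section TypeI.
Hypotheses (HbR : bR = 0%C) (HbL : bL = 0%C) (HaR : aR * aR = 1) (HaL : aL * aL = 1).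

Lemma typeI_spans : spanned_by kernel_system (glue (Cpow 0) (Cpow 0)).
Proof.
  intros psi Hpsi; apply glue_pow_spans; apply vanishing_tail_geometric.
  - apply (kernel_right_degenerate psi); auto.
  - apply (kernel_left_degenerate psi); auto.
Qed.

Lemma typeI_solution : aR + aL = 0 -> kernel_system (glue (Cpow 0) (Cpow 0)).
Proof.
  intro Hsum; apply kernel_system_glue_pow; rewrite ?HbR, ?HbL, ?Cnorm2_RtoC;
    try apply side_eq_degenerate_pow0; try lra.
  rewrite Hsum, Rmult_0_r; ring.
Qed.

Lemma typeI_vanishes psi : aR + aL <> 0 -> kernel_system psi -> psi 0%Z = C0.
Proof.
  intros Hsum (_ & _ & _ & Hj); rewrite HbR, HbL in Hj.
  assert (E : (RtoC (- (t * Q * (aR + aL))) * psi 0%Z)%C = 0%C)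
    by (rewrite <- Hj, RtoC_opp; ring).
  destruct (Cmult_eq0 _ _ E) as [E'|E']; auto; exfalso; revert E'; apply RtoC_neq0.
  assert (t * Q <> 0) by (intro; nra).
  intro Z; apply Hsum, (Rmult_eq_reg_l (t * Q)); lra.
Qed.

End TypeI.

Section TypeII.
Variable sg : bool.
Hypotheses (HbL : bL = 0%C) (HaL : aL * aL = 1) (HaR : 0 < 1 - aR * aR)
  (HbR : Cnorm2 bR = 1 - aR * aR) (Hsg : sgn sg = t * aL).

Lemma typeII_root_mult : (RtoC P * (bR * root_R sg))%C = RtoC (t * Q * (aR + aL)).
Proof. rewrite (root_R_mult HaR HbR); f_equal; rewrite Hsg; ring. Qed.

Lemma typeII_spans : spanned_by kernel_system (glue (Cpow (root_R sg)) (Cpow 0)).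
Proof.
  intros psi Hpsi; apply glue_pow_spans.
  - pose proof (kernel_right_recurrence HaR HbR psi (negb sg) Hpsi) as Hrec.
    rewrite Bool.negb_involutive in Hrec; apply (recurrence_geometric _ _ _ Hrec).
    destruct Hpsi as (_ & _ & _ & Hj); rewrite HbL in Hj.
    apply (Cmult_cancel_l (RtoC P * bR)); [apply Cmult_RtoC_neq0; lra|].
    change (right_seq psi 0) with (psi 0%Z).
    apply Cminus_eq0; rewrite <- Hj, <- typeII_root_mult; ring.
  - apply vanishing_tail_geometric, (kernel_left_degenerate psi); auto.
Qed.

Lemma typeII_solution : Cnorm2 (root_R sg) < 1 ->
  kernel_system (glue (Cpow (root_R sg)) (Cpow 0)).
Proof.
  intro Hr; apply kernel_system_glue_pow; auto.
  - rewrite Cnorm2_RtoC; lra.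
  - apply side_eq_root_R; auto.
  - rewrite HbL; apply side_eq_degenerate_pow0.
  - rewrite HbL, <- typeII_root_mult; ring.
Qed.

Lemma typeII_vanishes psi : 1 <= Cnorm2 (root_R sg) -> kernel_system psi -> psi 0%Z = C0.
Proof.
  intros Hr Hpsi.
  apply (decaying_geometric_zero (right_seq psi) (root_R sg)); auto.
  - apply in_l2_tails, Hpsi.
  - apply (spanned_glue_right _ _ _ _ typeII_spans Hpsi).
Qed.

End TypeII.

Section TypeII'.
Variable sg : bool.
Hypotheses (HbR : bR = 0%C) (HaR : aR * aR = 1) (HaL : 0 < 1 - aL * aL)
  (HbL : Cnorm2 bL = 1 - aL * aL) (Hsg : sgn sg = - (t * aR)).

Lemma typeII'_root_mult : (RtoC M * (bL * root_L sg))%C = RtoC (- (t * Q * (aR + aL))).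
Proof. rewrite (root_L_mult HaL HbL); f_equal; rewrite Hsg; ring. Qed.

Lemma typeII'_spans : spanned_by kernel_system (glue (Cpow 0) (Cpow (root_L sg))).
Proof.
  intros psi Hpsi; apply glue_pow_spans.
  - apply vanishing_tail_geometric, (kernel_right_degenerate psi); auto.
  - pose proof (kernel_left_recurrence HaL HbL psi (negb sg) Hpsi) as Hrec.
    rewrite Bool.negb_involutive in Hrec; apply (recurrence_geometric _ _ _ Hrec).
    destruct Hpsi as (_ & _ & _ & Hj); rewrite HbR in Hj.
    apply (Cmult_cancel_l (RtoC M * bL)); [apply Cmult_RtoC_neq0; lra|].
    change (left_seq psi 0) with (psi 0%Z).
    assert (Hm : RtoC (t * Q * (aR + aL)) = (- (RtoC M * (bL * root_L sg)))%C)
      by (rewrite typeII'_root_mult, RtoC_opp; ring).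
    apply Cminus_eq0; transitivity (- (RtoC P * (0 * right_seq psi 1)
      - RtoC M * (bL * left_seq psi 1) - RtoC (t * Q * (aR + aL)) * psi 0%Z))%C.
    + rewrite Hm; ring.
    + rewrite Hj; ring.
Qed.

Lemma typeII'_solution : Cnorm2 (root_L sg) < 1 ->
  kernel_system (glue (Cpow 0) (Cpow (root_L sg))).
Proof.
  intro Hl; apply kernel_system_glue_pow; auto.
  - rewrite Cnorm2_RtoC; lra.
  - rewrite HbR; apply side_eq_degenerate_pow0.
  - apply side_eq_root_L; auto.
  - rewrite HbR, typeII'_root_mult, RtoC_opp; ring.
Qed.

Lemma typeII'_vanishes psi : 1 <= Cnorm2 (root_L sg) -> kernel_system psi -> psi 0%Z = C0.
Proof.
  intros Hl Hpsi.
  apply (decaying_geometric_zero (left_seq psi) (root_L sg)); auto.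
  - apply in_l2_tails, Hpsi.
  - apply (spanned_glue_left _ _ _ _ typeII'_spans Hpsi).
Qed.

End TypeII'.

Section TypeIII.
Hypotheses (HaR : 0 < 1 - aR * aR) (HbR : Cnorm2 bR = 1 - aR * aR)
  (HaL : 0 < 1 - aL * aL) (HbL : Cnorm2 bL = 1 - aL * aL).

Lemma root_junction sg :
  (RtoC P * (bR * root_R sg) - RtoC M * (bL * root_L sg))%C = RtoC (t * Q * (aR + aL)).
Proof.
  rewrite (root_R_mult HaR HbR), (root_L_mult HaL HbL), <- RtoC_minus; f_equal; ring.
Qed.

Lemma junction_balance psi sg : kernel_system psi ->
  (RtoC P * bR * (right_seq psi 1 - root_R sg * psi 0%Z))%C =
  (RtoC M * bL * (left_seq psi 1 - root_L sg * psi 0%Z))%C.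
Proof.
  intros (_ & _ & _ & Hj); apply Cminus_eq0; rewrite <- Hj, <- (root_junction sg); ring.
Qed.

(* If one half-line forces the ratio [root (negb sg)] at the origin, the junction
   transmits the same label to the other half-line. *)
Lemma typeIII_spans sg : 1 <= Cnorm2 (root_R sg) \/ 1 <= Cnorm2 (root_L sg) ->
  spanned_by kernel_system (glue (Cpow (root_R (negb sg))) (Cpow (root_L (negb sg)))).
Proof.
  intros Hbad psi Hpsi.
  pose proof (kernel_right_recurrence HaR HbR psi sg Hpsi) as Rr.
  pose proof (kernel_left_recurrence HaL HbL psi sg Hpsi) as Rl.
  destruct (in_l2_tails psi (proj1 Hpsi)) as [Dr Dl].
  pose proof (junction_balance psi (negb sg) Hpsi) as Hb.
  assert (HPb : (RtoC P * bR)%C <> 0%C) by (apply Cmult_RtoC_neq0; lra).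
  assert (HMb : (RtoC M * bL)%C <> 0%C) by (apply Cmult_RtoC_neq0; lra).
  assert (Hratio : right_seq psi 1 = (root_R (negb sg) * psi 0%Z)%C /\
                   left_seq psi 1 = (root_L (negb sg) * psi 0%Z)%C).
  { destruct Hbad as [B|B].
    - pose proof (decaying_recurrence_ratio _ _ _ Dr B Rr) as E.
      change (right_seq psi 0) with (psi 0%Z) in E.
      split; [exact E|]; apply Cminus_eq0, (Cmult_cancel_l _ _ _ HMb).
      rewrite <- Hb, E; ring.
    - pose proof (decaying_recurrence_ratio _ _ _ Dl B Rl) as E.
      change (left_seq psi 0) with (psi 0%Z) in E.
      split; [|exact E]; apply Cminus_eq0, (Cmult_cancel_l _ _ _ HPb).
      rewrite Hb, E; ring. }
  apply glue_pow_spans.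
  - exact (recurrence_geometric _ _ _ Rr (proj1 Hratio)).
  - exact (recurrence_geometric _ _ _ Rl (proj2 Hratio)).
Qed.

Lemma typeIII_solution sg : Cnorm2 (root_R sg) < 1 -> Cnorm2 (root_L sg) < 1 ->
  kernel_system (glue (Cpow (root_R sg)) (Cpow (root_L sg))).
Proof.
  intros Hr Hl; apply kernel_system_glue_pow; auto using side_eq_root_R, side_eq_root_L.
  apply root_junction.
Qed.

Lemma typeIII_vanishes psi :
  (forall sg, 1 <= Cnorm2 (root_R sg) \/ 1 <= Cnorm2 (root_L sg)) ->
  kernel_system psi -> psi 0%Z = C0.
Proof.
  intros Hbad Hpsi.
  pose proof (spanned_glue_right _ _ _ _ (typeIII_spans true (Hbad true)) Hpsi 1) as Ef.
  pose proof (spanned_glue_right _ _ _ _ (typeIII_spans false (Hbad false)) Hpsi 1) as Et.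
  simpl negb in Ef, Et.
  assert (E : (RtoC (2 * Q) * psi 0%Z)%C = 0%C).
  { replace (RtoC (2 * Q)) with (RtoC P * (bR * root_R true) - RtoC P * (bR * root_R false))%C
      by (rewrite !(root_R_mult HaR HbR), <- RtoC_minus; f_equal; simpl; ring).
    transitivity (RtoC P * bR * (root_R true ^ 1 * psi 0%Z - root_R false ^ 1 * psi 0%Z))%C;
      [simpl; ring|].
    rewrite <- Ef, <- Et; ring. }
  destruct (Cmult_eq0 _ _ E) as [E'|E']; auto.
  exfalso; exact (RtoC_neq0 (2 * Q) ltac:(lra) E').
Qed.

End TypeIII.

End Kernel.

Lemma kernel_dim_0 T K e : (forall psi, in_kernel T psi <-> K psi) -> spanned_by K e ->
  (forall psi, K psi -> psi 0%Z = C0) -> kernel_dim T 0.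
Proof.
  intros HK He H0; exists (fun _ _ => C0); split; [intros; lia|]; split; [intros; lia|].
  intros psi Hpsi; apply HK in Hpsi; exists (fun _ => C0); intro x.
  rewrite (He psi Hpsi x), (H0 psi Hpsi); unfold lincomb; simpl; in_C; ring.
Qed.

Lemma kernel_dim_1 T K e : (forall psi, in_kernel T psi <-> K psi) -> spanned_by K e ->
  K e -> e 0%Z = RtoC 1 -> kernel_dim T 1.
Proof.
  intros HK He Ke E0; exists (fun _ => e); split; [|split].
  - intros; apply HK; auto.
  - intros c Hc k Hk; replace k with 0%nat by lia.
    specialize (Hc 0%Z); unfold lincomb in Hc; simpl in Hc; rewrite E0 in Hc.
    rewrite <- Hc; in_C; rewrite Cmult_1_r, Cplus_0_r; reflexivity.
  - intros psi Hpsi; apply HK in Hpsi; exists (fun _ => psi 0%Z); intro x.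
    rewrite (He psi Hpsi x) at 1; unfold lincomb; simpl; in_C; ring.
Qed.

Definition phase_coin (q z : Cx) : C := (expiArg q * z)%C.

Lemma minus2iQ_form s p q a1 a2 b psi x :
  minus2iQ s p q a1 a2 b psi x =
  (RtoC (1 + sgn s * p) * (phase_coin q (b (x + 1)%Z) * psi (x + 1)%Z)
   - RtoC (1 - sgn s * p) * (Cconj (phase_coin q (b x)) * psi (x - 1)%Z)
   + RtoC (sgn s * Cabs q * (a2 (x + 1)%Z - a1 x)) * psi x)%C.
Proof.
  unfold minus2iQ, phase_coin; rewrite Cmult_conj.
  change Defs.Copp with Copp; change Defs.Cconj with Cconj; change CR with RtoC.
  in_C; ring.
Qed.

Lemma Qeps_eq0_iff s p q a1 a2 b psi x :
  Qeps s p q a1 a2 b psi x = C0 <-> minus2iQ s p q a1 a2 b psi x = C0.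
Proof.
  unfold Qeps; change Defs.Cmul with Cmult; split; intro H.
  - destruct (Cmult_eq0 _ _ H) as [E|E]; auto.
    injection E; intro; exfalso; assert (/ 2 <> 0) by (apply Rinv_neq_0_compat; lra); auto.
  - rewrite H; in_C; ring.
Qed.

Section Walk.
Variables (s : bool) (p : R) (q : Cx) (a1 a2 : Z -> R) (b : Z -> Cx) (aL aR : R) (bL bR : Cx).
Hypotheses (Hq : q <> C0) (Hpq : p * p + Cnorm2 q = 1)
  (HxR : forall x, (1 <= x)%Z -> a1 x = aR /\ a2 x = - aR /\ b x = bR)
  (HxL : forall x, (x <= 0)%Z -> a1 x = aL /\ a2 x = - aL /\ b x = bL)
  (HnR : aR * aR + Cnorm2 bR = 1) (HnL : aL * aL + Cnorm2 bL = 1).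

Let T := Qeps s p q a1 a2 b.
Let K := kernel_system (1 + sgn s * p) (1 - sgn s * p) (Cabs q) (sgn s) aR aL
           (phase_coin q bR) (Cconj (phase_coin q bL)).

Lemma minus2iQ_right psi k :
  minus2iQ s p q a1 a2 b psi (Z.of_nat (S k)) =
  (RtoC (1 + sgn s * p) * (phase_coin q bR * right_seq psi (S (S k)))
   - RtoC (1 - sgn s * p) * (Cconj (phase_coin q bR) * right_seq psi k)
   - RtoC (2 * (sgn s * Cabs q * aR)) * right_seq psi (S k))%C.
Proof.
  rewrite minus2iQ_form.
  destruct (HxR (Z.of_nat (S k) + 1)%Z ltac:(lia)) as (_ & -> & ->).
  destruct (HxR (Z.of_nat (S k)) ltac:(lia)) as (-> & _ & ->).
  unfold right_seq.
  replace (Z.of_nat (S k) + 1)%Z with (Z.of_nat (S (S k))) by lia.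
  replace (Z.of_nat (S k) - 1)%Z with (Z.of_nat k) by lia.
  replace (sgn s * Cabs q * (- aR - aR)) with (- (2 * (sgn s * Cabs q * aR))) by ring.
  rewrite RtoC_opp; in_C; ring.
Qed.

Lemma minus2iQ_left psi k :
  minus2iQ s p q a1 a2 b psi (- Z.of_nat (S k))%Z =
  (- (RtoC (1 - sgn s * p) * (Cconj (phase_coin q bL) * left_seq psi (S (S k)))
      - RtoC (1 + sgn s * p) * (Cconj (Cconj (phase_coin q bL)) * left_seq psi k)
      - RtoC (2 * - (sgn s * Cabs q * aL)) * left_seq psi (S k)))%C.
Proof.
  rewrite minus2iQ_form, Cconj_conj.
  destruct (HxL (- Z.of_nat (S k) + 1)%Z ltac:(lia)) as (_ & -> & ->).
  destruct (HxL (- Z.of_nat (S k))%Z ltac:(lia)) as (-> & _ & ->).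
  unfold left_seq.
  replace (- Z.of_nat (S k) + 1)%Z with (- Z.of_nat k)%Z by lia.
  replace (- Z.of_nat (S k) - 1)%Z with (- Z.of_nat (S (S k)))%Z by lia.
  replace (sgn s * Cabs q * (- aL - aL)) with (2 * - (sgn s * Cabs q * aL)) by ring.
  in_C; ring.
Qed.

Lemma minus2iQ_origin psi :
  minus2iQ s p q a1 a2 b psi 0%Z =
  (RtoC (1 + sgn s * p) * (phase_coin q bR * right_seq psi 1)
   - RtoC (1 - sgn s * p) * (Cconj (phase_coin q bL) * left_seq psi 1)
   - RtoC (sgn s * Cabs q * (aR + aL)) * psi 0%Z)%C.
Proof.
  rewrite minus2iQ_form; simpl (0 + 1)%Z; simpl (0 - 1)%Z.
  destruct (HxR 1%Z ltac:(lia)) as (_ & -> & ->).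
  destruct (HxL 0%Z ltac:(lia)) as (-> & _ & ->).
  replace (sgn s * Cabs q * (- aR - aL)) with (- (sgn s * Cabs q * (aR + aL))) by ring.
  rewrite RtoC_opp; unfold right_seq, left_seq; simpl; in_C; ring.
Qed.

Lemma kernel_Qeps_iff psi : in_kernel T psi <-> K psi.
Proof.
  unfold T, K, in_kernel, kernel_system.
  setoid_rewrite Qeps_eq0_iff; split.
  - intros [Hl H0]; split; [exact Hl|]; split; [|split].
    + intro k; rewrite <- minus2iQ_right; apply H0.
    + intro k; pose proof (H0 (- Z.of_nat (S k))%Z) as E.
      rewrite minus2iQ_left in E; change C0 with (RtoC 0) in E.
      rewrite <- Copp_0, <- E; ring.
    + rewrite <- minus2iQ_origin; apply H0.
  - intros (Hl & Hr & Hlft & Hj); split; [exact Hl|]; intro x.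
    destruct (Z.lt_trichotomy x 0) as [Hx|[->|Hx]].
    + replace x with (- Z.of_nat (S (Z.to_nat (- x) - 1)))%Z by lia.
      rewrite minus2iQ_left, Hlft; in_C; ring.
    + rewrite minus2iQ_origin; exact Hj.
    + replace x with (Z.of_nat (S (Z.to_nat x - 1))) by lia.
      rewrite minus2iQ_right; apply Hr.
Qed.

Let rootR (sg : bool) : C := root_R (1 + sgn s * p) (Cabs q) (sgn s) aR (phase_coin q bR) sg.
Let rootL (sg : bool) : C :=
  root_L (1 - sgn s * p) (Cabs q) (sgn s) aL (Cconj (phase_coin q bL)) sg.

Lemma Cabs_pos : 0 < Cabs q.
Proof. apply sqrt_lt_R0, Cnorm2_pos, Hq. Qed.

Lemma Cabs_sq : Cabs q * Cabs q = 1 - sgn s * p * (sgn s * p).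
Proof.
  unfold Cabs; rewrite sqrt_sqrt by apply Cnorm2_ge0.
  replace (sgn s * p * (sgn s * p)) with (sgn s * sgn s * (p * p)) by ring.
  rewrite sgn_sq; lra.
Qed.

Lemma shift_bounds : -1 < sgn s * p < 1.
Proof.
  pose proof (Cnorm2_pos q Hq); pose proof (sgn_sq s).
  assert (sgn s * p * (sgn s * p) < 1) by nra; nra.
Qed.

Lemma Cnorm2_phase_coin z : Cnorm2 (phase_coin q z) = Cnorm2 z.
Proof.
  pose proof (Cnorm2_pos q Hq).
  unfold phase_coin, expiArg, Cabs; change Defs.Cmul with Cmult; change CR with RtoC.
  rewrite !Cnorm2_mult, Cnorm2_RtoC, <- Rinv_mult, sqrt_sqrt by lra; field; lra.
Qed.

Lemma coin_degenerate a z : a * a + Cnorm2 z = 1 -> z = C0 ->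
  a * a = 1 /\ phase_coin q z = 0%C /\ Cconj (phase_coin q z) = 0%C.
Proof.
  intros Hn ->; change (Cnorm2 C0) with (0 * 0 + 0 * 0) in Hn.
  assert (E : phase_coin q C0 = 0%C) by (unfold phase_coin; in_C; ring).
  rewrite E, Cconj_0; repeat split; lra.
Qed.

Lemma coin_bulk a z : a * a + Cnorm2 z = 1 -> z <> C0 ->
  0 < 1 - a * a /\ Cnorm2 (phase_coin q z) = 1 - a * a /\
  Cnorm2 (Cconj (phase_coin q z)) = 1 - a * a.
Proof.
  intros Hn Hz; pose proof (Cnorm2_pos z Hz).
  rewrite Cnorm2_conj, Cnorm2_phase_coin; repeat split; lra.
Qed.

Local Ltac walk_params :=
  match goal with
  | |- _ = 1 + _ => reflexivity
  | |- _ = 1 - _ => reflexivity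
  | |- -1 < _ < 1 => exact shift_bounds
  | |- 0 < Cabs q => exact Cabs_pos
  | |- Cabs q * Cabs q = _ => exact Cabs_sq
  | |- sgn s * sgn s = 1 => exact (sgn_sq s)
  end.

Lemma unit_cases x : x * x = 1 -> x = 1 \/ x = -1.
Proof. intro; nra. Qed.

Lemma sgn_of_unit x : x * x = 1 -> exists sg, sgn sg = x.
Proof. intros [-> | ->]%unit_cases; [exists true | exists false]; auto. Qed.

Lemma dim_typeI : bL = C0 -> bR = C0 ->
  (aL * aR < 0 -> kernel_dim T 1) /\ (aL * aR > 0 -> kernel_dim T 0).
Proof.
  intros HbL HbR.
  destruct (coin_degenerate _ _ HnL HbL) as (HaL & _ & HcL).
  destruct (coin_degenerate _ _ HnR HbR) as (HaR & HcR & _).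
  assert (Hsum : aR + aL = 0 <-> aL * aR < 0)
    by (destruct (unit_cases _ HaL), (unit_cases _ HaR); subst; split; lra).
  split; intro Hsign.
  - apply (kernel_dim_1 T K (glue (Cpow 0) (Cpow 0)) kernel_Qeps_iff); [| |reflexivity].
    + eapply typeI_spans; try walk_params; auto.
    + apply typeI_solution; auto; apply Hsum, Hsign.
  - apply (kernel_dim_0 T K (glue (Cpow 0) (Cpow 0)) kernel_Qeps_iff).
    + eapply typeI_spans; try walk_params; auto.
    + intros psi; eapply typeI_vanishes; try walk_params; auto.
      intros E%Hsum; lra.
Qed.

Lemma dim_typeII : bL = C0 -> bR <> C0 ->
  (- sgn s * p + aL * aR < 0 -> kernel_dim T 1) /\
  (- sgn s * p + aL * aR >= 0 -> kernel_dim T 0).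
Proof.
  intros HbL HbR.
  destruct (coin_degenerate _ _ HnL HbL) as (HaL & _ & HcL).
  destruct (coin_bulk _ _ HnR HbR) as (HaR & HcR & _).
  destruct (sgn_of_unit (sgn s * aL)) as [sg Hsg].
  { transitivity (sgn s * sgn s * (aL * aL)); [ring | rewrite sgn_sq, HaL; ring]. }
  assert (Hlt : Cnorm2 (rootR sg) < 1 <-> - sgn s * p + aL * aR < 0).
  { unfold rootR; rewrite (root_R_lt1_iff _ _ _ _ _ _ eq_refl shift_bounds Cabs_sq (sgn_sq s)
      HaR HcR), Hsg.
    replace (sgn s * aL * sgn s * aR) with (sgn s * sgn s * (aL * aR)) by ring.
    rewrite sgn_sq; split; intro; lra. }
  set (e := glue (Cpow (rootR sg)) (Cpow 0)).
  assert (He : spanned_by K e) by (eapply typeII_spans; try walk_params; eauto).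
  split; intro Hcond.
  - apply (kernel_dim_1 T K e kernel_Qeps_iff He); [|reflexivity].
    eapply typeII_solution; try walk_params; eauto; apply Hlt, Hcond.
  - apply (kernel_dim_0 T K e kernel_Qeps_iff He).
    intro psi; eapply typeII_vanishes; try walk_params; eauto.
    apply Rnot_lt_le; intros H%Hlt; lra.
Qed.

Lemma dim_typeII' : bL <> C0 -> bR = C0 ->
  (sgn s * p + aL * aR < 0 -> kernel_dim T 1) /\
  (sgn s * p + aL * aR >= 0 -> kernel_dim T 0).
Proof.
  intros HbL HbR.
  destruct (coin_bulk _ _ HnL HbL) as (HaL & _ & HcL).
  destruct (coin_degenerate _ _ HnR HbR) as (HaR & HcR & _).
  destruct (sgn_of_unit (- (sgn s * aR))) as [sg Hsg].
  { transitivity (sgn s * sgn s * (aR * aR)); [ring | rewrite sgn_sq, HaR; ring]. }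
  assert (Hlt : Cnorm2 (rootL sg) < 1 <-> sgn s * p + aL * aR < 0).
  { unfold rootL; rewrite (root_L_lt1_iff _ _ _ _ _ _ eq_refl shift_bounds Cabs_sq (sgn_sq s)
      HaL HcL), Hsg.
    replace (- (sgn s * aR) * sgn s * aL) with (- (sgn s * sgn s) * (aL * aR)) by ring.
    rewrite sgn_sq; split; intro; lra. }
  set (e := glue (Cpow 0) (Cpow (rootL sg))).
  assert (He : spanned_by K e) by (eapply typeII'_spans; try walk_params; eauto).
  split; intro Hcond.
  - apply (kernel_dim_1 T K e kernel_Qeps_iff He); [|reflexivity].
    eapply typeII'_solution; try walk_params; eauto; apply Hlt, Hcond.
  - apply (kernel_dim_0 T K e kernel_Qeps_iff He).
    intro psi; eapply typeII'_vanishes; try walk_params; eauto.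
    apply Rnot_lt_le; intros H%Hlt; lra.
Qed.

Lemma dim_typeIII : bL <> C0 -> bR <> C0 ->
  ((aR < sgn s * p < aL \/ aL < - sgn s * p < aR) -> kernel_dim T 1) /\
  (~ (aR < sgn s * p < aL \/ aL < - sgn s * p < aR) -> kernel_dim T 0).
Proof.
  intros HbL HbR.
  destruct (coin_bulk _ _ HnL HbL) as (HaL & _ & HcL).
  destruct (coin_bulk _ _ HnR HbR) as (HaR & HcR & _).
  assert (Hgood : forall sg, Cnorm2 (rootR sg) < 1 /\ Cnorm2 (rootL sg) < 1 <->
                    sgn sg * sgn s * aR < sgn s * p < sgn sg * sgn s * aL).
  { intro sg; unfold rootR, rootL.
    rewrite (root_R_lt1_iff _ _ _ _ _ _ eq_refl shift_bounds Cabs_sq (sgn_sq s) HaR HcR),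
      (root_L_lt1_iff _ _ _ _ _ _ eq_refl shift_bounds Cabs_sq (sgn_sq s) HaL HcL).
    tauto. }
  assert (Hbad : forall sg, ~ (Cnorm2 (rootR sg) < 1 /\ Cnorm2 (rootL sg) < 1) ->
                   1 <= Cnorm2 (rootR sg) \/ 1 <= Cnorm2 (rootL sg)).
  { intros sg H; destruct (Rlt_le_dec (Cnorm2 (rootR sg)) 1); [|auto].
    destruct (Rlt_le_dec (Cnorm2 (rootL sg)) 1); tauto. }
  assert (Hlabel : forall sg, Cnorm2 (rootR sg) < 1 /\ Cnorm2 (rootL sg) < 1 ->
                     aR < sgn s * p < aL \/ aL < - sgn s * p < aR).
  { intros sg H%Hgood; destruct (sgn_mult_cases sg s) as [E|E]; rewrite E in H; lra. }
  split; intro Hcond.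
  - assert (exists sg, Cnorm2 (rootR sg) < 1 /\ Cnorm2 (rootL sg) < 1) as [sg Hsg].
    { destruct Hcond; [exists s | exists (negb s)]; apply Hgood;
        rewrite ?sgn_negb; destruct (unit_cases _ (sgn_sq s)) as [Es|Es]; rewrite Es in *; lra. }
    apply (kernel_dim_1 T K (glue (Cpow (rootR sg)) (Cpow (rootL sg))) kernel_Qeps_iff);
      [| |reflexivity].
    + rewrite <- (Bool.negb_involutive sg).
      eapply typeIII_spans; try walk_params; eauto.
      apply Hbad; intros Hsg'%Hgood; apply Hgood in Hsg; rewrite sgn_negb in Hsg'; lra.
    + eapply typeIII_solution; try walk_params; eauto; apply Hsg.
  - assert (Hnone : forall sg, 1 <= Cnorm2 (rootR sg) \/ 1 <= Cnorm2 (rootL sg))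
      by (intro sg; apply Hbad; intros H%Hlabel; auto).
    assert (He : spanned_by K (glue (Cpow (rootR (negb true))) (Cpow (rootL (negb true)))))
      by (eapply typeIII_spans; try walk_params; eauto).
    apply (kernel_dim_0 T K _ kernel_Qeps_iff He).
    intro psi; eapply typeIII_vanishes; try walk_params; eauto.
Qed.

End Walk.

Lemma nontrivial_coin_traceless a1 a2 b : coin_ok a1 a2 b -> coin_nontrivial a1 a2 b ->
  a2 = - a1 /\ a1 * a1 + Cnorm2 b = 1.
Proof.
  intros (H1 & H2 & Hb) (N1 & N2); split; auto.
  destruct (Req_dec (Cnorm2 b) 0) as [Z|Z].
  - apply Cnorm2_eq0 in Z; change (RtoC 0) with C0 in Z; subst b.
    change (Cnorm2 C0) with (0 * 0 + 0 * 0) in H1, H2.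
    destruct (unit_cases a1), (unit_cases a2); subst; try lra;
      exfalso; [apply N1 | apply N2]; auto.
  - change Defs.Cmul with Cmult in Hb; change CR with RtoC in Hb.
    destruct (Cmult_eq0 _ _ Hb) as [E|E].
    + rewrite E, Cnorm2_RtoC in Z; lra.
    + injection E; lra.
Qed.

Theorem theorem4p2
  (p : R) (q : Cx) (a1 a2 : Z -> R) (b : Z -> Cx)
  (a1L a2L a1R a2R : R) (bL bR : Cx)
  (Hq : q <> C0) (Hpq : p * p + Cnorm2 q = 1)
  (Hcoin : forall x, coin_ok (a1 x) (a2 x) (b x))
  (HL : coin_ok a1L a2L bL) (HR : coin_ok a1R a2R bR)
  (HLnt : coin_nontrivial a1L a2L bL) (HRnt : coin_nontrivial a1R a2R bR)
  (HxR : forall x : Z, (1 <= x)%Z -> a1 x = a1R /\ a2 x = a2R /\ b x = bR)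
  (HxL : forall x : Z, (x <= 0)%Z -> a1 x = a1L /\ a2 x = a2L /\ b x = bL) :
  let aL := a1L in let aR := a1R in
  let d := fun (s : bool) (n : nat) => kernel_dim (Qeps s p q a1 a2 b) n in
  (* (1) Type I *)
  (bL = C0 -> bR = C0 -> forall s : bool,
     (aL * aR < 0 -> d s 1%nat) /\ (aL * aR > 0 -> d s 0%nat)) /\
  (* (2) Type II *)
  (bL = C0 -> bR <> C0 -> forall s : bool,
     (- sgn s * p + aL * aR < 0 -> d s 1%nat) /\
     (- sgn s * p + aL * aR >= 0 -> d s 0%nat)) /\
  (* (3) Type II' *)
  (bL <> C0 -> bR = C0 -> forall s : bool,
     (sgn s * p + aL * aR < 0 -> d s 1%nat) /\
     (sgn s * p + aL * aR >= 0 -> d s 0%nat)) /\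
  (* (4) Type III *)
  (bL <> C0 -> bR <> C0 -> forall s : bool,
     ((aR < sgn s * p < aL \/ aL < - sgn s * p < aR) -> d s 1%nat) /\
     (~ (aR < sgn s * p < aL \/ aL < - sgn s * p < aR) -> d s 0%nat)).
Proof.
  cbv zeta.
  destruct (nontrivial_coin_traceless _ _ _ HL HLnt) as [-> HnL].
  destruct (nontrivial_coin_traceless _ _ _ HR HRnt) as [-> HnR].
  split; [|split; [|split]]; intros HbL HbR s;
    [ apply (dim_typeI s p q a1 a2 b a1L a1R bL bR)
    | apply (dim_typeII s p q a1 a2 b a1L a1R bL bR)
    | apply (dim_typeII' s p q a1 a2 b a1L a1R bL bR)
    | apply (dim_typeIII s p q a1 a2 b a1L a1R bL bR) ]; auto.
Qed.
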